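(* Let $G$ be a finite group and $p$ a prime. Let $\mathcal P(G,1)$ be the number of elements of $G$ of order divisible by $p$, and let $\mathbf 1_G$ denote the trivial $\mathbb{Z}_p[G]$-lattice. Then $$v_p(C_{\theta_G}(\mathbf 1_G))=-v_p(|G|)+\frac{1}{|G|}\sum_{g\in G}v_p(|g|)+\frac{\mathcal P(G,1)}{|G|(p-1)},$$ where $|g|$ denotes the order of $g$.
   Context: Artin relation: there are unique $\alpha_H\in\mathbb{Q}$, for $H$ running over representatives of conjugacy classes of cyclic subgroups of $G$, with $[\mathbf 1]=\sum_H\alpha_H[\mathbb{Q}[G/H]]$ in the rational representation ring tensored with $\mathbb{Q}$. The Artin relation is $\theta_G=[G]-\sum_H\alpha_H[H]$, a formal $\mathbb{Q}$-combination of symbols $[H]$ (standing for the $G$-sets $G/H$). For such a combination $\theta=\sum_K\beta_K[K]$ that is a rational Brauer relation, the regulator constant of the trivial module satisfies $$v_p(C_\theta(\mathbf 1_G))=-\sum_K\beta_K\,v_p(|K|).$$ This is the general regulator constant $\prod_i\det(\tfrac1{|H_i|}\langle\ ,\ \rangle|_{M^{H_i}})/\prod_j\det(\tfrac1{|H'_j|}\langle\ ,\ \rangle|_{M^{H'_j}})$ for an integral relation $\sum_i[H_i]-\sum_j[H'_j]$, evaluated at $M=\mathbb{Z}_p$ with form $\langle x,y\rangle=xy$, and extended linearly to rational relations. *)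

From HB Require Import structures.
From mathcomp Require Import all_boot all_order all_algebra all_fingroup all_solvable.
Set Implicit Arguments. Unset Strict Implicit. Unset Printing Implicit Defensive.
Import GRing.Theory Num.Theory.
Local Open Scope ring_scope.

Section ArtinDefs.
Variable gT : finGroupType.

(* Character of the permutation representation Q[G/H] at g:
   number of left cosets xH of H in G fixed by left multiplication by g. *)
Definition perm_char (G H : {set gT}) (g : gT) : nat :=
  #|[set C in lcosets H G | (g *: C)%g == C]|.

Definition cyclic_class_reps (G : {group gT}) (reps : {set {set gT}}) : Prop :=
  [/\ (forall K, K \in reps -> [&& group_set K, K \subset G & cyclic K]),
      (forall H : {group gT}, H \subset G -> cyclic H ->
         exists2 K, K \in reps & exists2 x, x \in G & (H :=: K :^ x)%g) &
      (forall K1 K2 x, K1 \in reps -> K2 \in reps -> x \in G ->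
         K1 = (K2 :^ x)%g -> K1 = K2)].

(* alpha gives the coefficients of the Artin relation:
   [1] = sum_H alpha_H [Q[G/H]] in R_Q(G) (x) Q, i.e. equality of characters. *)
Definition artin_coeffs (G : {group gT}) (reps : {set {set gT}})
    (alpha : {set gT} -> rat) : Prop :=
  cyclic_class_reps G reps /\
  forall g, g \in G ->
    (1 : rat) = \sum_(H in reps) alpha H * (perm_char G H g)%:R.

(* The Artin relation theta_G = [G] - sum_H alpha_H [H], as a formal
   Q-combination of subgroups (coefficient function). *)
Definition artin_relation (G : {group gT}) (reps : {set {set gT}})
    (alpha : {set gT} -> rat) : {set gT} -> rat :=
  fun K => ((K == G :> {set gT})%:R - (K \in reps)%:R * alpha K)%R.

(* v_p(C_theta(1_G)) = - sum_K beta_K v_p(|K|) for theta = sum_K beta_K [K]. *)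
Definition vp_regconst_trivial (p : nat) (beta : {set gT} -> rat) : rat :=
  (- \sum_(K : {set gT}) beta K * (logn p #|K|)%:R)%R.

Definition calP (G : {set gT}) (p : nat) : nat :=
  #|[set g in G | (p %| #[g]%g)%N]|.

End ArtinDefs.

(* Put w(g) = v_p(|g|) + [p divides |g|] / (p - 1) (this is [pweight p g]).
   On a cyclic group of order n = p^A m, the element a^i has
   v_p(|a^i|) = A - #{c < A | p^(c+1) divides i}, so summing over i and using
   n - n/p^A = (p - 1) (n/p + ... + n/p^A) gives a total weight of n A.
   As w is a class function, the coset-counting form of Frobenius reciprocity
   yields sum_g w(g) chi_{G/H}(g) = |G| v_p(|H|) for H cyclic, and pairing w
   with 1 = sum_H alpha_H chi_{G/H} gives
   sum_H alpha_H v_p(|H|) = (1/|G|) sum_g w(g), which is the formula. *)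
From HB Require Import structures.
From mathcomp Require Import all_boot all_order all_algebra all_fingroup all_solvable.
From mathcomp Require Import ring zify.
Import GRing.Theory Num.Theory.
Local Open Scope ring_scope.

Lemma sum_dvdn_ord d n : (d %| n)%N -> (\sum_(i < n) (d %| i) = n %/ d)%N.
Proof.
case: n => [|n] dv_d_n; first by rewrite big_ord0 div0n.
rewrite divn_count_dvd big_nat_recr //= dv_d_n.
rewrite -(big_mkord xpredT (fun i => (d %| i) : nat)) big_ltn //= dvdn0.
by rewrite addnC.
Qed.

Lemma sum_ord_ltn m k : (\sum_(c < m) (c < k) = minn m k)%N.
Proof.
elim: m => [|m IHm]; first by rewrite big_ord0 min0n.
by rewrite big_ord_recr /= IHm; case: ltnP => /=; lia.
Qed.

Lemma sum_divn_expS_telescope p n k : (0 < p)%N -> (p ^ k %| n)%N ->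
  (\sum_(c < k) n %/ p ^ c.+1 * (p - 1) + n %/ p ^ k = n)%N.
Proof.
move=> p_gt0; elim: k => [|k IHk] dv_pk1_n; first by rewrite big_ord0 expn0 divn1.
rewrite big_ord_recr /= -addnA -[RHS]IHk; last first.
  exact: dvdn_trans (dvdn_exp2l p (leqnSn k)) dv_pk1_n.
congr (_ + _)%N; case/dvdnP: dv_pk1_n => q ->.
rewrite mulnK ?expn_gt0 ?p_gt0 // expnS mulnA mulnK ?expn_gt0 ?p_gt0 //.
by rewrite mulnBr muln1 subnK // leq_pmulr.
Qed.

Lemma card_set_in_cond (T : finType) (A : {pred T}) (P : pred T) :
  #|[set x in A | P x]| = (\sum_(x in A) P x)%N.
Proof.
rewrite -sum1dep_card big_mkcondr /=.
by apply: eq_bigr => x _; case: (P x).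
Qed.

Lemma sum_cycle_expg (gT : finGroupType) (R : nmodType) (F : gT -> R) (a : gT) :
  \sum_(h in <[a]>%g) F h = \sum_(i < #[a]%g) F (a ^+ i)%g.
Proof.
have -> : <[a]>%g = [set (a ^+ (nat_of_ord i))%g | i : 'I_#[a]%g].
  apply/setP => h; apply/idP/imsetP => [|[i _ ->]]; last exact: mem_cycle.
  by case/cyclePmin => i lt_i_a ->; exists (Ordinal lt_i_a).
rewrite big_imset /=; last by move=> i j _ _ /eqP; rewrite eq_expg_ord // => /eqP.
by apply: eq_bigl => i; rewrite inE.
Qed.

Section OrderOfPowers.

Variables (gT : finGroupType) (p : nat) (a : gT).
Hypothesis p_pr : prime p.

Let n := #[a]%g.
Let A := logn p n.
Let n_gt0 : (0 < n)%N := order_gt0 a.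

Lemma logn_order_expg i :
  (logn p #[a ^+ i]%g + \sum_(c < A) (p ^ c.+1 %| i) = A)%N.
Proof.
set g := gcdn n i.
have g_gt0 : (0 < g)%N by rewrite gcdn_gt0 n_gt0.
have le_g_A : (logn p g <= A)%N := dvdn_leq_log p n_gt0 (dvdn_gcdl n i).
have -> : (\sum_(c < A) (p ^ c.+1 %| i) = logn p g)%N.
  rewrite -[RHS](minn_idPr le_g_A) -sum_ord_ltn; apply: eq_bigr => c _.
  rewrite -(pfactor_dvdn _ _ g_gt0) // dvdn_gcd.
  by rewrite (pfactor_dvdn _ _ n_gt0) ?ltn_ord.
by rewrite orderXgcd logn_div ?dvdn_gcdl // subnK.
Qed.

Lemma dvdn_order_expg i : ((p %| #[a ^+ i]%g) + (p ^ A %| i) = 1)%N.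
Proof.
have g_gt0 : (0 < gcdn n i)%N by rewrite gcdn_gt0 n_gt0.
have o_gt0 : (0 < n %/ gcdn n i)%N.
  by rewrite divn_gt0 //; apply: dvdn_leq n_gt0 (dvdn_gcdl n i).
rewrite orderXgcd -[p in (p %| _)%N]expn1 (pfactor_dvdn 1 p_pr o_gt0).
rewrite logn_div ?dvdn_gcdl // subn_gt0.
have -> : (p ^ A %| i)%N = (p ^ A %| gcdn n i)%N by rewrite dvdn_gcd pfactor_dvdnn.
by rewrite (pfactor_dvdn _ _ g_gt0) //; case: ltnP.
Qed.

Lemma sum_logn_order_cycle :
  (\sum_(i < n) logn p #[a ^+ i]%g + \sum_(c < A) n %/ p ^ c.+1 = n * A)%N.
Proof.
have -> : (n * A = \sum_(i < n) A)%N by rewrite sum_nat_const card_ord.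
rewrite -(eq_bigr _ (fun (i : 'I_n) _ => logn_order_expg i)) big_split /=.
rewrite exchange_big; congr (_ + _)%N; apply: eq_bigr => c _.
by rewrite sum_dvdn_ord // (pfactor_dvdn _ _ n_gt0) // ltn_ord.
Qed.

Lemma sum_dvdn_order_cycle :
  (\sum_(i < n) (p %| #[a ^+ i]%g) + n %/ p ^ A = n)%N.
Proof.
rewrite -sum_dvdn_ord ?pfactor_dvdnn // -big_split /=.
by rewrite -[RHS]card_ord -sum1_card; apply: eq_bigr => i _; rewrite dvdn_order_expg.
Qed.

End OrderOfPowers.

Definition pweight {gT : finGroupType} (p : nat) (g : gT) : rat :=
  (logn p #[g]%g)%:R + (p %| #[g]%g)%N%:R / (p%:R - 1).

Lemma sum_pweight_cycle (gT : finGroupType) p (a : gT) : prime p ->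
  \sum_(h in <[a]>%g) pweight p h = (#[a]%g)%:R * (logn p #[a]%g)%:R.
Proof.
move=> p_pr; set n := #[a]%g; set A := logn p n.
set S := (\sum_(c < A) n %/ p ^ c.+1)%N.
have p1_neq0 : (p%:R - 1 : rat) != 0.
  by rewrite subr_eq0 pnatr_eq1; case: eqP (prime_gt1 p_pr) => // ->.
have count_p_order : (\sum_(i < n) (p %| #[a ^+ i]%g) = S * (p - 1))%N.
  apply/eqP; rewrite -(eqn_add2r (n %/ p ^ A)) sum_dvdn_order_cycle //.
  by rewrite big_distrl sum_divn_expS_telescope ?prime_gt0 ?pfactor_dvdnn.
rewrite sum_cycle_expg big_split /= -mulr_suml -!natr_sum count_p_order.
rewrite natrM natrB ?prime_gt0 // mulfK // -natrD sum_logn_order_cycle //.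
by rewrite natrM.
Qed.

Lemma sum_mul_perm_char (gT : finGroupType) (R : comPzRingType)
    (G H : {group gT}) (f : gT -> R) :
  (H \subset G)%g -> {in G &, forall g x, f (g ^ x)%g = f g} ->
  \sum_(g in G) f g * (perm_char G H g)%:R = #|G : H|%g%:R * \sum_(h in H) f h.
Proof.
move=> sHG fJ; rewrite /perm_char.
under eq_bigr => g _ do rewrite card_set_in_cond natr_sum mulr_sumr.
rewrite exchange_big /= -card_lcosets mulr_natl -sumr_const.
apply: eq_bigr => _ /lcosetsP[x xG ->].
transitivity (\sum_(g in G | (g ^ x)%g \in H) f g).
  (* g fixes the coset x *: H exactly when g ^ x lies in H. *)
  rewrite big_mkcondr; apply: eq_bigr => g _.
  rewrite -lcosetM (sameP eqP lcoset_eqP) mem_lcoset conjgE mulgA.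
  by case: (_ \in H); rewrite ?mulr1 ?mulr0.
rewrite (reindex_inj (conjg_inj x^-1%g)) /=.
apply: eq_big => [h | h].
  by rewrite conjgKV groupJr ?groupV // andb_idl //; apply/subsetP.
by case/andP=> _; rewrite conjgKV => hH; rewrite fJ ?groupV // (subsetP sHG).
Qed.

Lemma sum_pweight_perm_char_cycle (gT : finGroupType) (G : {group gT}) p a :
  prime p -> a \in G ->
  \sum_(g in G) pweight p g * (perm_char G <[a]>%g g)%:R
    = #|G|%:R * (logn p #[a]%g)%:R.
Proof.
move=> p_pr aG; have sAG : (<[a]> \subset G)%g by rewrite cycle_subG.
rewrite sum_mul_perm_char //; last by move=> g x _ _; rewrite /pweight orderJ.
by rewrite sum_pweight_cycle // mulrA; congr (_ * _); rewrite -natrM mulnC orderE Lagrange.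
Qed.

Lemma vp_regconst_artin_relation (gT : finGroupType) (G : {group gT}) p
    (reps : {set {set gT}}) (alpha : {set gT} -> rat) :
  vp_regconst_trivial p (artin_relation G reps alpha)
    = - (logn p #|G|)%:R + \sum_(K in reps) alpha K * (logn p #|K|)%:R.
Proof.
rewrite /vp_regconst_trivial /artin_relation.
under eq_bigr => K _ do rewrite mulrBl.
rewrite sumrB (bigD1 (G : {set gT})) //= eqxx mul1r big1 => [|K /negbTE->]; last first.
  by rewrite mul0r.
rewrite addr0 opprB addrC [in RHS]big_mkcond; congr (_ + _).
by apply: eq_bigr => K _; case: (K \in reps); rewrite ?mul1r ?mul0r.
Qed.

Lemma sum_pweight_artin (gT : finGroupType) (G : {group gT}) p
    (reps : {set {set gT}}) (alpha : {set gT} -> rat) :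
  prime p -> artin_coeffs G reps alpha ->
  \sum_(g in G) pweight p g
    = #|G|%:R * \sum_(K in reps) alpha K * (logn p #|K|)%:R.
Proof.
move=> p_pr [[repsP _ _] artin].
transitivity (\sum_(g in G) pweight p g *
                \sum_(K in reps) alpha K * (perm_char G K g)%:R).
  by apply: eq_bigr => g gG; rewrite -artin // mulr1.
under eq_bigr => g _ do rewrite mulr_sumr.
rewrite exchange_big mulr_sumr; apply: eq_bigr => K /repsP/and3P[_ sKG /cyclicP[a defK]].
have aG : a \in G by rewrite -cycle_subG -defK.
under eq_bigr => g _ do rewrite mulrCA.
by rewrite -mulr_sumr defK sum_pweight_perm_char_cycle // -orderE mulrCA.
Qed.

Theorem lemma5p8 (gT : finGroupType) (G : {group gT}) (p : nat)
    (reps : {set {set gT}}) (alpha : {set gT} -> rat) :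
  prime p -> artin_coeffs G reps alpha ->
  vp_regconst_trivial p (artin_relation G reps alpha) =
    - (logn p #|G|)%:R
    + (\sum_(g in G) ((logn p #[g]%g)%:R : rat)) / (#|G|)%:R
    + (calP G p)%:R / ((#|G|)%:R * (p%:R - 1)).
Proof.
move=> p_pr artin; rewrite vp_regconst_artin_relation -addrA; congr (_ + _).
have G_neq0 : (#|G|%:R : rat) != 0 by rewrite pnatr_eq0 -lt0n cardG_gt0.
rewrite -[LHS](mulKf G_neq0) -sum_pweight_artin // big_split /= -mulr_suml.
by rewrite /calP card_set_in_cond natr_sum invfM; ring.
Qed.
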